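(* Let $q$ be a power of $2$. Then in ${\rm PG}(4,q)$ there exist a set $\mathcal L$ of $q^3+1$ pairwise skew lines and a set $\mathcal P$ of $q^3+1$ planes any two of which intersect in exactly one point, such that no line of $\mathcal L$ is contained in a plane of $\mathcal P$. *)

From mathcomp Require Import all_boot all_order all_algebra all_field.
Set Implicit Arguments. Unset Strict Implicit. Unset Printing Implicit Defensive.
Import GRing.Theory.
Local Open Scope ring_scope.

(* PG(n,F) is modelled by the lattice of subspaces of F^(n+1) = 'rV[F]_(n.+1).
   Points = 1-dim subspaces, lines = 2-dim, planes = 3-dim. *)
Definition PG_line (F : fieldType) (n : nat) (U : {vspace 'rV[F]_n.+1}) : Prop :=
  \dim U = 2%N.
Definition PG_plane (F : fieldType) (n : nat) (U : {vspace 'rV[F]_n.+1}) : Prop :=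
  \dim U = 3%N.
Definition skew_lines (F : fieldType) (n : nat) (U V : {vspace 'rV[F]_n.+1}) : Prop :=
  (U :&: V)%VS = 0%VS.
Definition meet_in_one_point (F : fieldType) (n : nat) (U V : {vspace 'rV[F]_n.+1}) : Prop :=
  \dim (U :&: V) = 1%N.

From mathcomp Require Import all_boot all_order all_algebra all_field.
From mathcomp Require Import ring.

(* Fix a cubic X^3 - c2 X^2 - c1 X - c0 without roots in F, let S be the shift
   (a1, a2, a3) |-> (a2, a3, c0 a1 + c1 a2 + c2 a3) of the associated linear recurrence
   and C its transpose.  Neither has an eigenvalue, so s a + t S a = 0 forces s = t = 0
   or a = 0, and a, C a are independent for a <> 0.  Hence the q^3 lines {(u, u M(a))},
   M(a) with rows a and S a, are pairwise skew, and the q^3 planes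
   {(x.(b + C b), - x.(C b), x)} pairwise meet in a point.  Swapping one regulus of
   lines and adding the plane <e0, e1, e3> completes both families to q^3 + 1 members.
   No line lies in a plane, by the identity a.(C b) = (S a).b. *)

Set Implicit Arguments.
Unset Strict Implicit.
Unset Printing Implicit Defensive.
Import GRing.Theory.

Lemma pairwise_irrefl_inj (I : eqType) (T : Type) (R : T -> T -> Prop) (f : I -> T) :
  (forall i, ~ R (f i) (f i)) -> (forall i j, i <> j -> R (f i) (f j)) -> injective f.
Proof.
move=> irrR Rf i j fij; have [//|/eqP neq_ij] := eqVneq i j.
by have := Rf i j neq_ij; rewrite fij => /irrR.
Qed.

Lemma neq_triple (T : eqType) (x1 x2 x3 y1 y2 y3 : T) :
  Some (x1, x2, x3) <> Some (y1, y2, y3) -> [|| x1 != y1, x2 != y2 | x3 != y3].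
Proof. by apply: contra_notT => /norP[/negPn/eqP-> /norP[/negPn/eqP-> /negPn/eqP->]]. Qed.

Section FieldFacts.
Local Open Scope ring_scope.

Lemma exists_rootless_cubic (F : finFieldType) :
  exists c0 c1 c2 : F, forall m : F, m ^+ 3 != c2 * m ^+ 2 + c1 * m + c0.
Proof.
(* A coefficient triple with root m is g (m, c1, c2); by counting, g cannot be onto. *)
pose g (x : F * F * F) := (x.1.1 ^+ 3 - x.2 * x.1.1 ^+ 2 - x.1.2 * x.1.1, x.1.2, x.2).
have g_not_inj : ~ {in predT &, injective g}.
  move=> /(_ (0, 0, 1) (1, 0, 1) isT isT) g01.
  have [/eqP] : (0, 0, 1) = (1, 0, 1) :> F * F * F.
    by apply: g01; rewrite /g /=; congr (_, _, _); ring.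
  by rewrite eq_sym oner_eq0.
have /existsP[[[c0 c1] c2] /forallP rootless] :
    [exists c : F * F * F, [forall m, m ^+ 3 != c.2 * m ^+ 2 + c.1.2 * m + c.1.1]].
  apply: contraT => /existsPn has_root; case: g_not_inj; apply/image_injP.
  rewrite eqn_leq leq_image_card; apply/subset_leq_card/subsetP => -[[c0 c1] c2] _.
  have /forallPn[m /negPn/eqP /= root_m] := has_root (c0, c1, c2).
  have -> : (c0, c1, c2) = g (m, c1, c2).
    by rewrite /g /= root_m; congr (_, _, _); ring.
  exact: image_f.
by exists c0, c1, c2.
Qed.

Lemma minors_eq0_proportional (F : fieldType) (x1 x2 x3 w1 w2 w3 : F) :
  [|| w1 != 0, w2 != 0 | w3 != 0] ->
  x1 * w2 = x2 * w1 -> x1 * w3 = x3 * w1 -> x2 * w3 = x3 * w2 ->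
  exists l, [/\ x1 = l * w1, x2 = l * w2 & x3 = l * w3].
Proof.
move=> /or3P[] w_neq0 e12 e13 e23.
- exists (x1 / w1); split; first by field.
  + by apply: (mulIf w_neq0); rewrite -e12; field.
  + by apply: (mulIf w_neq0); rewrite -e13; field.
- exists (x2 / w2); split.
  + by apply: (mulIf w_neq0); rewrite e12; field.
  + by field.
  + by apply: (mulIf w_neq0); rewrite -e23; field.
- exists (x3 / w3); split; last by field.
  + by apply: (mulIf w_neq0); rewrite e13; field.
  + by apply: (mulIf w_neq0); rewrite e23; field.
Qed.

Lemma orthogonal2_proportional (F : fieldType) (d1 d2 d3 e1 e2 e3 x1 x2 x3 : F) :
  [|| d2 * e3 - d3 * e2 != 0, d3 * e1 - d1 * e3 != 0 | d1 * e2 - d2 * e1 != 0] ->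
  x1 * d1 + x2 * d2 + x3 * d3 = 0 -> x1 * e1 + x2 * e2 + x3 * e3 = 0 ->
  exists l, [/\ x1 = l * (d2 * e3 - d3 * e2), x2 = l * (d3 * e1 - d1 * e3)
              & x3 = l * (d1 * e2 - d2 * e1)].
Proof.
set xd := x1 * d1 + x2 * d2 + x3 * d3; set xe := x1 * e1 + x2 * e2 + x3 * e3.
move=> cross_neq0 xd0 xe0.
apply: minors_eq0_proportional => //; apply: subr0_eq.
- by transitivity (d3 * xe - e3 * xd); [rewrite /xd /xe; ring | rewrite xd0 xe0 !mulr0 subr0].
- by transitivity (e2 * xd - d2 * xe); [rewrite /xd /xe; ring | rewrite xd0 xe0 !mulr0 subr0].
- by transitivity (d1 * xe - e1 * xd); [rewrite /xd /xe; ring | rewrite xd0 xe0 !mulr0 subr0].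
Qed.

End FieldFacts.

Section Spans.
Local Open Scope ring_scope.
Variables (K : fieldType) (vT : vectType K).
Implicit Types (x y z v : vT) (U V : {vspace vT}).

Lemma span2P x y v :
  reflect (exists s t, v = s *: x + t *: y) (v \in <<[:: x; y]>>%VS).
Proof.
rewrite span_cons span_seq1; apply: (iffP memv_addP).
  by move=> [_ /vlineP[s ->] [_ /vlineP[t ->] ->]]; exists s, t.
by move=> [s [t ->]]; exists (s *: x); [exact: memvZ (memv_line x) | exists (t *: y)];
  [exact: memvZ (memv_line y) |].
Qed.

Lemma span3P x y z v :
  reflect (exists s t u, v = s *: x + t *: y + u *: z) (v \in <<[:: x; y; z]>>%VS).
Proof.
rewrite span_cons; apply: (iffP memv_addP).
  by move=> [_ /vlineP[s ->] [_ /span2P[t [u ->]] ->]]; exists s, t, u; rewrite addrA.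
move=> [s [t [u ->]]]; exists (s *: x); first exact: memvZ (memv_line x).
by exists (t *: y + u *: z); rewrite ?addrA //; apply/span2P; exists t, u.
Qed.

Lemma cap_span2_eq0 x y x' y' :
  (forall s t s' t', s *: x + t *: y = s' *: x' + t' *: y' -> s = 0 /\ t = 0) ->
  (<<[:: x; y]>> :&: <<[:: x'; y']>> = 0)%VS.
Proof.
move=> coef0; apply/eqP; rewrite -subv0; apply/subvP => v.
rewrite memv_cap => /andP[/span2P[s [t ->]] /span2P[s' [t' /coef0[-> ->]]]].
by rewrite !scale0r addr0 memv0.
Qed.

Lemma dim_span2 x y : y != 0 -> x \notin <[y]>%VS -> \dim <<[:: x; y]>> = 2%N.
Proof.
move=> y_neq0 x_notin; apply/eqP; change (free [:: x; y]).
by rewrite free_cons span_seq1 x_notin seq1_free.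
Qed.

Lemma dim_span3 x y z :
  z != 0 -> y \notin <[z]>%VS -> x \notin <<[:: y; z]>>%VS -> \dim <<[:: x; y; z]>> = 3%N.
Proof.
move=> z_neq0 y_notin x_notin; apply/eqP; change (free [:: x; y; z]).
by rewrite free_cons x_notin free_cons span_seq1 y_notin seq1_free.
Qed.

Lemma dim_cap_eq1 U V :
  (\dim U + \dim V = (dim vT).+1)%N -> (exists v, U :&: V <= <[v]>)%VS ->
  \dim (U :&: V) = 1%N.
Proof.
move=> dimUV [v capUV_line]; apply/anti_leq/andP; split.
  by rewrite (leq_trans (dimvS capUV_line)) // dim_vline leq_b1.
have := dimv_sum_cap U V; rewrite dimUV -dimvf => dim_sum.
rewrite lt0n; apply: contraTneq (dimvS (subvf (U + V))) => cap0.
by rewrite -ltnNge -dim_sum cap0 addn0.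
Qed.

End Spans.

Section Row5.
Local Open Scope ring_scope.
Variable R : pzRingType.

Definition row5 (x0 x1 x2 x3 x4 : R) : 'rV[R]_5 :=
  \row_(j < 5) [:: x0; x1; x2; x3; x4]`_j.

Lemma scale_row5 k x0 x1 x2 x3 x4 :
  k *: row5 x0 x1 x2 x3 x4 = row5 (k * x0) (k * x1) (k * x2) (k * x3) (k * x4).
Proof. by apply/rowP => -[[|[|[|[|[|j]]]]] ?]; rewrite !mxE. Qed.

Lemma add_row5 x0 x1 x2 x3 x4 y0 y1 y2 y3 y4 :
  row5 x0 x1 x2 x3 x4 + row5 y0 y1 y2 y3 y4 =
  row5 (x0 + y0) (x1 + y1) (x2 + y2) (x3 + y3) (x4 + y4).
Proof. by apply/rowP => -[[|[|[|[|[|j]]]]] ?]; rewrite !mxE //= addr0. Qed.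

Lemma row5_inj x0 x1 x2 x3 x4 y0 y1 y2 y3 y4 :
  row5 x0 x1 x2 x3 x4 = row5 y0 y1 y2 y3 y4 ->
  [/\ x0 = y0, x1 = y1, x2 = y2, x3 = y3 & x4 = y4].
Proof.
move/rowP => eq_xy.
by split; [move: (eq_xy 0) | move: (eq_xy 1) | move: (eq_xy 2) | move: (eq_xy 3)
          | move: (eq_xy 4)]; rewrite !mxE.
Qed.

Lemma row5_eq0 x0 x1 x2 x3 x4 :
  row5 x0 x1 x2 x3 x4 = 0 -> [/\ x0 = 0, x1 = 0, x2 = 0, x3 = 0 & x4 = 0].
Proof.
move=> x_eq0; apply: row5_inj; rewrite x_eq0.
by apply/rowP => -[[|[|[|[|[|j]]]]] ?]; rewrite !mxE.
Qed.

End Row5.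

Section ProjectiveFacts.
Variables (F : fieldType) (n : nat).
Implicit Type U : {vspace 'rV[F]_n.+1}.

Lemma skew_lines_irrefl U : PG_line U -> ~ skew_lines U U.
Proof. by rewrite /PG_line /skew_lines capvv => dimU U0; move: dimU; rewrite U0 dimv0. Qed.

Lemma meet_in_one_point_irrefl U : PG_plane U -> ~ meet_in_one_point U U.
Proof. by rewrite /PG_plane /meet_in_one_point capvv => ->. Qed.

End ProjectiveFacts.

Section Construction.
Local Open Scope ring_scope.
Variable F : fieldType.
Variables c0 c1 c2 : F.
Hypothesis rootless : forall m : F, m ^+ 3 != c2 * m ^+ 2 + c1 * m + c0.

Lemma c0_neq0 : c0 != 0.
Proof. by have := rootless 0; rewrite !expr0n /= !mulr0 !add0r eq_sym. Qed.

Definition recur (a1 a2 a3 : F) := c0 * a1 + c1 * a2 + c2 * a3.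

Lemma shift_eigen_eq0 m d1 d2 d3 :
  d2 = m * d1 -> d3 = m * d2 -> recur d1 d2 d3 = m * d3 -> d1 = 0.
Proof.
move=> d2E d3E recurE.
have : d1 * (m ^+ 3 - (c2 * m ^+ 2 + c1 * m + c0)) = m * d3 - recur d1 d2 d3.
  by rewrite /recur d3E d2E; ring.
by rewrite recurE subrr => /eqP; rewrite mulf_eq0 subr_eq0 (negbTE (rootless m)) orbF => /eqP.
Qed.

Lemma shift_pencil_eq0 s t d1 d2 d3 :
  s * d1 + t * d2 = 0 -> s * d2 + t * d3 = 0 -> s * d3 + t * recur d1 d2 d3 = 0 ->
  (s = 0 /\ t = 0) \/ [/\ d1 = 0, d2 = 0 & d3 = 0].
Proof.
move=> e1 e2 e3; have [t0|t_neq0] := eqVneq t 0.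
  rewrite t0 !mul0r !addr0 in e1 e2 e3.
  have [s0|s_neq0] := eqVneq s 0; [by left | right].
  by split; apply: (mulfI s_neq0); rewrite mulr0.
have eigen x y : s * x + t * y = 0 -> y = (- s / t) * x.
  move=> e; have -> : y = (s * x + t * y - s * x) / t by field.
  by rewrite e; field.
right; have d1_0 := shift_eigen_eq0 (eigen _ _ e1) (eigen _ _ e2) (eigen _ _ e3).
have d2_0 : d2 = 0 by rewrite (eigen _ _ e1) d1_0 mulr0.
by split; rewrite // (eigen _ _ e2) d2_0 mulr0.
Qed.

Lemma companion_eigen_eq0 m d1 d2 d3 :
  c0 * d3 = m * d1 -> d1 + c1 * d3 = m * d2 -> d2 + c2 * d3 = m * d3 ->
  [/\ d1 = 0, d2 = 0 & d3 = 0].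
Proof.
move=> e1 e2 e3.
have d2E : d2 = m * d3 - c2 * d3 by rewrite -e3; ring.
have d1E : d1 = m * d2 - c1 * d3 by rewrite -e2; ring.
have : d3 * (m ^+ 3 - (c2 * m ^+ 2 + c1 * m + c0)) = m * d1 - c0 * d3.
  by rewrite d1E d2E; ring.
rewrite e1 subrr => /eqP; rewrite mulf_eq0 subr_eq0 (negbTE (rootless m)) orbF => /eqP d3_0.
have d2_0 : d2 = 0 by rewrite d2E d3_0 !mulr0 subr0.
by split; rewrite // d1E d2_0 d3_0 !mulr0 subr0.
Qed.

Lemma companion_cross_neq0 d1 d2 d3 : [|| d1 != 0, d2 != 0 | d3 != 0] ->
  [|| d2 * (d2 + c2 * d3) - d3 * (d1 + c1 * d3) != 0,
      d3 * (c0 * d3) - d1 * (d2 + c2 * d3) != 0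
    | d1 * (d1 + c1 * d3) - d2 * (c0 * d3) != 0].
Proof.
move=> d_neq0; apply: contraT => /norP[/negPn/eqP w1 /norP[/negPn/eqP w2 /negPn/eqP w3]].
have [m [e1 e2 e3]] : exists m, [/\ c0 * d3 = m * d1, d1 + c1 * d3 = m * d2
                                  & d2 + c2 * d3 = m * d3].
  apply: minors_eq0_proportional => //; apply: subr0_eq.
  - by rewrite -oppr0 -w3; ring.
  - by rewrite -w2; ring.
  - by rewrite -oppr0 -w1; ring.
have [d1_0 d2_0 d3_0] := companion_eigen_eq0 e1 e2 e3.
by move: d_neq0; rewrite d1_0 d2_0 d3_0 eqxx.
Qed.

(* The line {(u, u M)} where M has rows a and its shift (a2, a3, recur a1 a2 a3). *)
Definition graph_line a1 a2 a3 : {vspace 'rV[F]_5} :=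
  <<[:: row5 1 0 a1 a2 a3; row5 0 1 a2 a3 (recur a1 a2 a3)]>>%VS.

Definition regulus_line v1 v2 : {vspace 'rV[F]_5} :=
  <<[:: row5 v1 v2 0 0 0; row5 0 0 v1 0 (c0 * v2)]>>%VS.

(* The plane {(x.(b + C b), - x.(C b), x)}, where C b = (c0 b3, b1 + c1 b3, b2 + c2 b3). *)
Definition graph_plane b1 b2 b3 : {vspace 'rV[F]_5} :=
  <<[:: row5 (b1 + c0 * b3) (- (c0 * b3)) 1 0 0;
        row5 (b2 + b1 + c1 * b3) (- (b1 + c1 * b3)) 0 1 0;
        row5 (b3 + b2 + c2 * b3) (- (b2 + c2 * b3)) 0 0 1]>>%VS.

Definition plane013 : {vspace 'rV[F]_5} :=
  <<[:: row5 1 0 0 0 0; row5 0 1 0 0 0; row5 0 0 0 1 0]>>%VS.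

Lemma skew_graph_lines a1 a2 a3 a1' a2' a3' :
  [|| a1 != a1', a2 != a2' | a3 != a3'] ->
  skew_lines (graph_line a1 a2 a3) (graph_line a1' a2' a3').
Proof.
move=> neq_a; apply: cap_span2_eq0 => s t s' t'.
rewrite !scale_row5 !add_row5 => /row5_inj[e0 e1 e2 e3 e4].
rewrite !mulr1 !mulr0 !addr0 !add0r in e0 e1; subst s' t'.
have e1' : s * (a1 - a1') + t * (a2 - a2') = 0.
  by rewrite -(subrr (s * a1 + t * a2)) {2}e2; ring.
have e2' : s * (a2 - a2') + t * (a3 - a3') = 0.
  by rewrite -(subrr (s * a2 + t * a3)) {2}e3; ring.
have e3' : s * (a3 - a3') + t * recur (a1 - a1') (a2 - a2') (a3 - a3') = 0.
  by rewrite -(subrr (s * a3 + t * recur a1 a2 a3)) {2}e4 /recur; ring.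
case: (shift_pencil_eq0 e1' e2' e3') => // -[d1_0 d2_0 d3_0].
by move: neq_a; rewrite -(subr_eq0 a1) -(subr_eq0 a2) -(subr_eq0 a3) d1_0 d2_0 d3_0 eqxx.
Qed.

Lemma skew_graph_regulus a1 a2 a3 v1 v2 : (a2 != 0) || (a3 != 0) ->
  skew_lines (graph_line a1 a2 a3) (regulus_line v1 v2).
Proof.
move=> a_neq0; apply: cap_span2_eq0 => s t p q.
rewrite !scale_row5 !add_row5 => /row5_inj[e0 e1 e2 e3 e4].
rewrite !mulr1 !mulr0 !addr0 !add0r in e0 e1 e2 e3 e4; subst s t.
have e1' : p * v1 * (p * a1 - q) + p * v2 * (p * a2) = 0.
  by rewrite -(subrr (p * (q * v1))) -{1}e2; ring.
have e2' : p * v1 * (p * a2) + p * v2 * (p * a3) = 0.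
  by rewrite -(mulr0 p) -e3; ring.
have e3' : p * v1 * (p * a3) + p * v2 * recur (p * a1 - q) (p * a2) (p * a3) = 0.
  by rewrite -(subrr (p * (q * (c0 * v2)))) -{1}e4 /recur; ring.
case: (shift_pencil_eq0 e1' e2' e3') => // -[_ pa2_0 pa3_0].
suff -> : p = 0 by rewrite !mul0r.
by case/orP: a_neq0 => ai_neq0; apply/eqP;
  [move/eqP: pa2_0 | move/eqP: pa3_0]; rewrite mulf_eq0 (negbTE ai_neq0) orbF.
Qed.

Lemma skew_regulus_lines v1 v2 v1' v2' : v1 * v2' - v2 * v1' != 0 ->
  skew_lines (regulus_line v1 v2) (regulus_line v1' v2').
Proof.
move=> det_neq0; apply: cap_span2_eq0 => p q p' q'.
rewrite !scale_row5 !add_row5 => /row5_inj[e0 e1 e2 _ e4].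
rewrite !mulr0 !addr0 !add0r in e0 e1 e2 e4.
have coef0 k k' : k * v1 = k' * v1' -> k * v2 = k' * v2' -> k = 0.
  move=> kv1 kv2; have : k * (v1 * v2' - v2 * v1') = 0.
    by rewrite mulrBr !mulrA kv1 kv2; ring.
  by move/eqP; rewrite mulf_eq0 (negbTE det_neq0) orbF => /eqP.
split; first exact: coef0 e0 e1.
by apply: coef0 e2 _; apply: (mulfI c0_neq0); rewrite mulrCA e4 mulrCA.
Qed.

Lemma cap_graph_planes b1 b2 b3 b1' b2' b3' : [|| b1 != b1', b2 != b2' | b3 != b3'] ->
  exists v, (graph_plane b1 b2 b3 :&: graph_plane b1' b2' b3' <= <[v]>)%VS.
Proof.
move=> neq_b; set d1 := b1 - b1'; set d2 := b2 - b2'; set d3 := b3 - b3'.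
have /companion_cross_neq0 cross_neq0 : [|| d1 != 0, d2 != 0 | d3 != 0] by rewrite !subr_eq0.
eexists; apply/subvP => y; rewrite memv_cap.
case/andP => /span3P[x1 [x2 [x3 yE]]] /span3P[x1' [x2' [x3' y'E]]].
rewrite yE !scale_row5 !add_row5 in y'E; case/row5_inj: y'E => e0 e1 e2 e3 e4.
rewrite !mulr1 !mulr0 !addr0 !add0r in e2 e3 e4; subst x1' x2' x3'.
move/eqP: e0; rewrite -subr_eq0 => /eqP e0; move/eqP: e1; rewrite -subr_eq0 => /eqP e1.
have xCd : x1 * (c0 * d3) + x2 * (d1 + c1 * d3) + x3 * (d2 + c2 * d3) = 0.
  by rewrite -oppr0 -e1 /d1 /d2 /d3; ring.
have xd : x1 * d1 + x2 * d2 + x3 * d3 = 0.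
  by rewrite -(subr0 0) -{1}e0 -{1}xCd /d1 /d2 /d3; ring.
have [l [x1E x2E x3E]] := orthogonal2_proportional cross_neq0 xd xCd.
by rewrite yE x1E x2E x3E; apply/vlineP; exists l; rewrite -!scalerA -!scalerDr.
Qed.

Lemma cap_graph_plane013 b1 b2 b3 :
  exists v, (graph_plane b1 b2 b3 :&: plane013 <= <[v]>)%VS.
Proof.
eexists; apply/subvP => y; rewrite memv_cap.
case/andP => /span3P[x1 [x2 [x3 yE]]] /span3P[z1 [z2 [z3 y'E]]].
rewrite yE !scale_row5 !add_row5 in y'E; case/row5_inj: y'E => _ _ x1_0 _ x3_0.
rewrite !mulr1 !mulr0 !addr0 !add0r in x1_0 x3_0.
by rewrite yE x1_0 x3_0 !scale0r add0r addr0; apply/vlineP; exists x2.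
Qed.

Lemma graph_line_not_in_graph_plane a1 a2 a3 b1 b2 b3 :
  ~~ (graph_line a1 a2 a3 <= graph_plane b1 b2 b3)%VS.
Proof.
apply/negP => /span_subvP sub_ab.
have /span3P[x1 [x2 [x3]]] := sub_ab _ (mem_head _ _).
rewrite !scale_row5 !add_row5 => /row5_inj[_ e1 e2 e3 e4].
have /span3P[y1 [y2 [y3]]] := sub_ab (row5 0 1 a2 a3 (recur a1 a2 a3)) (mem_last _ [:: _]).
rewrite !scale_row5 !add_row5 => /row5_inj[f0 f1 f2 f3 f4].
rewrite !mulr1 !mulr0 !addr0 !add0r in e2 e3 e4 f2 f3 f4; subst x1 x2 x3 y1 y2 y3.
(* These read 0 = - a.(C b), 0 = (S a).(b + C b) and 1 = - (S a).(C b); they add up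
   to 0 = 1 because C is the transpose of the shift S, i.e. a.(C b) = (S a).b. *)
have : (1 : F) = - (0 + 0) by rewrite {1}e1 f0 f1 /recur; ring.
by rewrite addr0 oppr0 => /eqP; rewrite oner_eq0.
Qed.

Lemma regulus_line_not_in_graph_plane v1 v2 b1 b2 b3 : (v1 != 0) || (v2 != 0) ->
  ~~ (regulus_line v1 v2 <= graph_plane b1 b2 b3)%VS.
Proof.
move=> v_neq0; apply/negP => /span_subvP sub_vb.
have /span3P[x1 [x2 [x3]]] := sub_vb _ (mem_head _ _).
rewrite !scale_row5 !add_row5 => /row5_inj[e0 e1 e2 e3 e4].
rewrite !mulr1 !mulr0 !addr0 !add0r in e2 e3 e4; subst x1 x2 x3.
by move: v_neq0; rewrite e0 e1 !mul0r !addr0 eqxx.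
Qed.

Lemma graph_line_not_in_plane013 a1 a2 a3 : (a2 != 0) || (a3 != 0) ->
  ~~ (graph_line a1 a2 a3 <= plane013)%VS.
Proof.
move=> a_neq0; apply/negP => /span_subvP sub_a.
have /span3P[x1 [x2 [x3]]] := sub_a _ (mem_head _ _).
rewrite !scale_row5 !add_row5 => /row5_inj[_ _ _ _ a3_0].
have /span3P[y1 [y2 [y3]]] := sub_a (row5 0 1 a2 a3 (recur a1 a2 a3)) (mem_last _ [:: _]).
rewrite !scale_row5 !add_row5 => /row5_inj[_ _ a2_0 _ _].
rewrite !mulr0 !addr0 in a2_0 a3_0.
by move: a_neq0; rewrite a2_0 a3_0 eqxx.
Qed.

Lemma regulus_line_not_in_plane013 v1 v2 : (v1 != 0) || (v2 != 0) ->
  ~~ (regulus_line v1 v2 <= plane013)%VS.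
Proof.
move=> v_neq0; apply/negP => /span_subvP sub_v.
have /span3P[x1 [x2 [x3]]] := sub_v (row5 0 0 v1 0 (c0 * v2)) (mem_last _ [:: _]).
rewrite !scale_row5 !add_row5 => /row5_inj[_ _ v1_0 _ c0v2_0].
rewrite !mulr0 !addr0 in v1_0 c0v2_0.
move/eqP: c0v2_0; rewrite mulf_eq0 (negbTE c0_neq0) => /eqP v2_0.
by move: v_neq0; rewrite v1_0 v2_0 eqxx.
Qed.

Lemma graph_line_is_line a1 a2 a3 : PG_line (graph_line a1 a2 a3).
Proof.
apply: dim_span2; first by apply/eqP => /row5_eq0[_ /eqP]; rewrite oner_eq0.
by apply/vlineP => -[k]; rewrite scale_row5 => /row5_inj[/eqP]; rewrite mulr0 oner_eq0.
Qed.

Lemma regulus_line_is_line v1 v2 : (v1 != 0) || (v2 != 0) -> PG_line (regulus_line v1 v2).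
Proof.
move=> v_neq0; apply: dim_span2.
  apply/eqP => /row5_eq0[_ _ v1_0 _ /eqP]; rewrite mulf_eq0 (negbTE c0_neq0) /= => /eqP v2_0.
  by move: v_neq0; rewrite v1_0 v2_0 eqxx.
apply/vlineP => -[k]; rewrite scale_row5 => /row5_inj[v1_0 v2_0 _ _ _].
by move: v_neq0; rewrite v1_0 v2_0 !mulr0 eqxx.
Qed.

Lemma graph_plane_is_plane b1 b2 b3 : PG_plane (graph_plane b1 b2 b3).
Proof.
apply: dim_span3; first by apply/eqP => /row5_eq0[_ _ _ _ /eqP]; rewrite oner_eq0.
  by apply/vlineP => -[k]; rewrite scale_row5 => /row5_inj[_ _ _ /eqP]; rewrite mulr0 oner_eq0.
apply/span2P => -[s [t]]; rewrite !scale_row5 add_row5 => /row5_inj[_ _ /eqP].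
by rewrite !mulr0 addr0 oner_eq0.
Qed.

Lemma plane013_is_plane : PG_plane plane013.
Proof.
apply: dim_span3; first by apply/eqP => /row5_eq0[_ _ _ /eqP]; rewrite oner_eq0.
  by apply/vlineP => -[k]; rewrite scale_row5 => /row5_inj[_ /eqP]; rewrite mulr0 oner_eq0.
apply/span2P => -[s [t]]; rewrite !scale_row5 add_row5 => /row5_inj[/eqP].
by rewrite !mulr0 addr0 oner_eq0.
Qed.

(* The graph lines with a2 = a3 = 0 and the line <e2, e4> form a regulus; it is replaced
   by its opposite regulus because graph_line 0 0 0 = <e0, e1> lies in plane013. *)
Definition line_of (o : option (F * F * F)) : {vspace 'rV[F]_5} :=
  if o is Some (a1, a2, a3) then
    if (a2 == 0) && (a3 == 0) then regulus_line 1 a1 else graph_line a1 a2 a3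
  else regulus_line 0 1.

Definition plane_of (o : option (F * F * F)) : {vspace 'rV[F]_5} :=
  if o is Some (b1, b2, b3) then graph_plane b1 b2 b3 else plane013.

Lemma line_of_is_line o : PG_line (line_of o).
Proof.
case: o => [[[a1 a2] a3]|] /=; last by apply: regulus_line_is_line; rewrite oner_eq0 orbT.
by case: ifP => _; [apply: regulus_line_is_line; rewrite oner_eq0 | apply: graph_line_is_line].
Qed.

Lemma plane_of_is_plane o : PG_plane (plane_of o).
Proof.
by case: o => [[[b1 b2] b3]|]; [apply: graph_plane_is_plane | apply: plane013_is_plane].
Qed.

Lemma line_of_skew o o' : o <> o' -> skew_lines (line_of o) (line_of o').
Proof.
have skewC U V : skew_lines U V -> skew_lines V U by rewrite /skew_lines capvC.
have off_regulus a2 a3 : ((a2 == 0) && (a3 == 0)) = false -> (a2 != 0) || (a3 != 0).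
  by rewrite -negb_and => ->.
case: o o' => [[[a1 a2] a3]|] [[[a1' a2'] a3']|] // neq_o /=.
- have neq_a := neq_triple neq_o.
  case: ifP => [/andP[/eqP a2_0 /eqP a3_0]|/off_regulus a_neq0];
    case: ifP => [/andP[/eqP a2'_0 /eqP a3'_0]|/off_regulus a'_neq0].
  + apply: skew_regulus_lines; rewrite mul1r mulr1 subr_eq0 eq_sym.
    by move: neq_a; rewrite a2_0 a3_0 a2'_0 a3'_0 eqxx !orbF.
  + exact/skewC/skew_graph_regulus.
  + exact: skew_graph_regulus.
  + exact: skew_graph_lines.
- case: ifP => [_|/off_regulus a_neq0]; last exact: skew_graph_regulus.
  by apply: skew_regulus_lines; rewrite mulr1 mulr0 subr0 oner_eq0.
- case: ifP => [_|/off_regulus a'_neq0]; last exact/skewC/skew_graph_regulus.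
  by apply: skew_regulus_lines; rewrite mul0r mulr1 sub0r oppr_eq0 oner_eq0.
Qed.

Lemma plane_of_meet o o' : o <> o' -> meet_in_one_point (plane_of o) (plane_of o').
Proof.
move=> neq_o; apply: dim_cap_eq1; first by rewrite !plane_of_is_plane dim_matrix.
case: o o' neq_o => [[[b1 b2] b3]|] [[[b1' b2'] b3']|] //= neq_o.
- by apply: cap_graph_planes; apply: neq_triple.
- exact: cap_graph_plane013.
- by rewrite capvC; apply: cap_graph_plane013.
Qed.

Lemma line_of_not_in_plane_of o o' : ~~ (line_of o <= plane_of o')%VS.
Proof.
have ne10 : (1 : F) != 0 by rewrite oner_eq0.
case: o o' => [[[a1 a2] a3]|] [[[b1 b2] b3]|] /=.
- case: ifP => _; first by apply: regulus_line_not_in_graph_plane; rewrite ne10.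
  exact: graph_line_not_in_graph_plane.
- case: ifP => [_|/negbT]; first by apply: regulus_line_not_in_plane013; rewrite ne10.
  by rewrite negb_and; apply: graph_line_not_in_plane013.
- by apply: regulus_line_not_in_graph_plane; rewrite ne10 orbT.
- by apply: regulus_line_not_in_plane013; rewrite ne10 orbT.
Qed.

End Construction.

Theorem theorem3p9 (F : finFieldType) (h : nat) (hq : #|F| = (2 ^ h)%N) :
  exists (L P : 'I_((#|F| ^ 3).+1) -> {vspace 'rV[F]_(4.+1)}),
  [/\ injective L, injective P, (forall i, PG_line (L i)) &
    [/\ (forall i, PG_plane (P i)),
        (forall i j, i <> j -> skew_lines (L i) (L j)),
        (forall i j, i <> j -> meet_in_one_point (P i) (P j)) &
        (forall i j, ~~ (L i <= P j)%VS)]].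
Proof.
have [c0 [c1 [c2 rootless]]] := exists_rootless_cubic F.
have card_index : #|{: option (F * F * F)}| = (#|F| ^ 3).+1.
  by rewrite card_option !card_prod !expnS expn0 muln1 mulnA.
pose index i : option (F * F * F) := enum_val (cast_ord (esym card_index) i).
have index_neq i j : i <> j -> index i <> index j.
  by move=> neq_ij /enum_val_inj/cast_ord_inj.
pose L i := line_of c0 c1 c2 (index i); pose P i := plane_of c0 c1 c2 (index i).
have L_skew i j : i <> j -> skew_lines (L i) (L j).
  by move/index_neq; apply: line_of_skew.
have P_meet i j : i <> j -> meet_in_one_point (P i) (P j).
  by move/index_neq; apply: plane_of_meet.
exists L, P; split.
- apply: pairwise_irrefl_inj L_skew => i.
  exact/skew_lines_irrefl/(line_of_is_line rootless).
- apply: pairwise_irrefl_inj P_meet => i.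
  exact/meet_in_one_point_irrefl/plane_of_is_plane.
- by move=> i; apply: line_of_is_line.
split=> // [i|i j]; first exact: plane_of_is_plane.
exact: line_of_not_in_plane_of.
Qed.
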